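(* Let $\xi,\zeta$ be admissible families and suppose that for each predictable stopping time $\tau\in\mathcal T$ with $\tau>0$ a.s., $\{\xi(\tau)=\zeta(\tau)\}=\emptyset$ a.s. Then for each $\theta\in\mathcal T$ and each non-decreasing sequence of stopping times $(\theta_n)_{n\in\mathbb N}\subset\mathcal T$ with $\theta_n\uparrow\theta$, $$\{\xi(\theta)=\zeta(\theta)\}\cap\{\theta_n<\theta\text{ for all }n\}=\emptyset\quad\text{a.s.}$$
   Context: Filtered probability space $(\Omega,\mathcal F,(\mathcal F_t)_{0\le t\le T},P)$ satisfying the usual conditions, $\mathcal F=\mathcal F_T$, $\mathcal F_0$ trivial, $T\in(0,\infty)$. $\mathcal T$: stopping times valued in $[0,T]$. A family $\phi=(\phi(\theta),\theta\in\mathcal T)$ of $\overline{\mathbb R}$-valued random variables is admissible if each $\phi(\theta)$ is $\mathcal F_\theta$-measurable and $\phi(\theta)=\phi(\theta')$ a.s. on $\{\theta=\theta'\}$. ''$E=\emptyset$ a.s.'' means $P(E)=0$. *)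

From HB Require Import structures.
From mathcomp Require Import all_boot all_order all_algebra.
From mathcomp Require Import all_classical all_reals all_analysis measurable_realfun.
Set Implicit Arguments. Unset Strict Implicit. Unset Printing Implicit Defensive.
Import Order.TTheory GRing.Theory Num.Theory numFieldNormedType.Exports.
Local Open Scope classical_set_scope.
Local Open Scope ring_scope.

Section Filtration.
Context {d : measure_display} {Omega : measurableType d} {R : realType}.
Variables (P : probability Omega R) (T : R) (F : R -> set (set Omega)).

Definition usual_filtration : Prop :=
  (forall t, 0 <= t <= T -> sigma_algebra setT (F t)) /\
  (forall t, 0 <= t <= T -> F t `<=` measurable) /\
  (forall s t, 0 <= s -> s <= t -> t <= T -> F s `<=` F t) /\
  (forall t, 0 <= t < T ->
     F t = [set A | forall s, t < s <= T -> F s A]) /\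
  (forall N, P.-negligible N -> F 0 N) /\
  F T = [set A | measurable A] /\
  (forall A, F 0 A -> P A = 0%E \/ P A = 1%E).

Definition stopping_time (tau : Omega -> R) : Prop :=
  (forall w, 0 <= tau w <= T) /\
  (forall t, 0 <= t <= T -> F t [set w | tau w <= t]).

Definition F_at (tau : Omega -> R) : set (set Omega) :=
  [set A | forall t, 0 <= t <= T -> F t (A `&` [set w | tau w <= t])].

Definition F_at_measurable (tau : Omega -> R) (Y : Omega -> \bar R) : Prop :=
  forall B : set (\bar R), measurable B -> F_at tau (Y @^-1` B).

(** admissible family: indexed by stopping times (values of phi at
    non-stopping times are irrelevant). *)
Definition admissible (phi : (Omega -> R) -> Omega -> \bar R) : Prop :=
  (forall theta, stopping_time theta -> F_at_measurable theta (phi theta)) /\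
  (forall theta theta', stopping_time theta -> stopping_time theta' ->
     P.-negligible [set w | theta w = theta' w /\ phi theta w <> phi theta' w]).

Definition predictable (tau : Omega -> R) : Prop :=
  stopping_time tau /\
  exists taun : nat -> Omega -> R,
    [/\ (forall n, stopping_time (taun n)),
        (forall n w, taun n w <= taun n.+1 w),
        (forall w, (fun n => taun n w) @ \oo --> tau w) &
        (forall n w, 0 < tau w -> taun n w < tau w)].

End Filtration.

(* Restrict theta to the event A = {theta_n < theta for all n}, which lies in F_theta, and
   send it to T off A.  The resulting stopping time tau is positive and predictable: on A it
   is announced by theta_n (capped by T - T/(n+1)), off A by T - T/(n+1).  Hence
   xi(tau) <> zeta(tau) a.s., and since tau = theta on A and xi, zeta are admissible,
   xi(theta) <> zeta(theta) a.s. on A. *)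
From HB Require Import structures.
From mathcomp Require Import all_boot all_order all_algebra.
From mathcomp Require Import all_classical all_reals all_analysis measurable_realfun.
Import Order.TTheory GRing.Theory Num.Theory numFieldNormedType.Exports.
Local Open Scope classical_set_scope.
Local Open Scope ring_scope.

Section stopping_times.
Context {d : measure_display} {Omega : measurableType d} {R : realType}.
Context {P : probability Omega R} {T : R} {F : R -> set (set Omega)}.
Hypothesis hF : usual_filtration P T F.

Let sigma_algebra_filtration {t : R} : 0 <= t <= T -> sigma_algebra setT (F t).
Proof. by case: hF => h _ /h. Qed.

Lemma filtration_measurableE {t : R} : 0 <= t <= T ->
  F t = (measurable : set (set (g_sigma_algebraType (F t)))).
Proof.
by move=> ht; rewrite measurable_g_measurableTypeE //; exact: sigma_algebra_filtration.
Qed.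

Lemma filtration_setT {t : R} : 0 <= t <= T -> F t setT.
Proof. by move=> ht; rewrite filtration_measurableE. Qed.

Lemma stopping_time_le_set {s : Omega -> R} {t x : R} :
  stopping_time T F s -> 0 <= t <= T -> x <= t -> F t [set w | s w <= x].
Proof.
move=> [s0 sF] /andP[t0 tT] xt.
have [x0|x0] := ltP x 0.
  rewrite (_ : [set w | s w <= x] = set0); first by rewrite filtration_measurableE ?t0.
  apply/seteqP; split => // w /= sx; have /andP[s0w _] := s0 w.
  by move: (le_lt_trans (le_trans s0w sx) x0); rewrite ltxx.
have [_ [_ [mono _]]] := hF.
by apply: (mono x t) => //; apply: sF; rewrite x0 (le_trans xt tT).
Qed.

Lemma measurable_stopping_time_min {s : Omega -> R} {t : R} :
  stopping_time T F s -> 0 <= t <= T ->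
  measurable_fun (setT : set (g_sigma_algebraType (F t))) (fun w => Num.min (s w) t).
Proof.
move=> hs ht; apply: (measurability _ (RGenOInfty.measurableE R)).
move=> /= _ [_ [x ->] <-]; rewrite setTI.
have [tx|xt] := leP t x.
  rewrite (_ : _ @^-1` _ = set0) //.
  by apply/seteqP; split => // w /=; rewrite in_itv /= andbT lt_min (ltNge x t) tx andbF.
rewrite (_ : _ @^-1` _ = ~` [set w | s w <= x]); last first.
  by apply/seteqP; split => w /=; rewrite in_itv /= andbT lt_min xt andbT ltNge => /negP.
rewrite -(filtration_measurableE ht) -setTD.
case: (sigma_algebra_filtration ht) => _ closedC _; apply: closedC.
exact: stopping_time_le_set hs ht (ltW xt).
Qed.

Lemma filtration_lt {f g : Omega -> R} {t : R} : 0 <= t <= T ->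
  measurable_fun (setT : set (g_sigma_algebraType (F t))) f ->
  measurable_fun (setT : set (g_sigma_algebraType (F t))) g ->
  F t [set w | f w < g w].
Proof.
move=> ht mf mg; rewrite (filtration_measurableE ht).
by have := measurable_fun_ltr mf mg measurableT (I : measurable [set true]); rewrite setTI.
Qed.

Lemma F_at_ltl (s th : Omega -> R) : stopping_time T F s -> stopping_time T F th ->
  F_at T F s [set w | s w < th w].
Proof.
move=> hs hth t ht.
(* On [{s <= t}], [s < th] is decided by the F_t-measurable [s `min` t < th `min` t]. *)
have slt := filtration_lt ht (measurable_stopping_time_min hs ht)
                            (measurable_stopping_time_min hth ht).
rewrite (_ : _ `&` _ = ([set w | Num.min (s w) t < Num.min (th w) t] `&` [set w | s w <= t])
   `|` ([set w | s w <= t] `&` ~` [set w | th w <= t])); last first.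
  apply/seteqP; split => w /=.
    move=> [slt' st]; have [tht|tht] := leP (th w) t; last by right; split; rewrite // -ltNge.
    by left; rewrite (min_l st).
  case=> [[]|[st /negP]]; last by rewrite -ltNge => tht; split => //; exact: le_lt_trans tht.
  by move=> + st; rewrite (min_l st) lt_min => /andP[].
have sle := stopping_time_le_set hs ht (lexx t).
have thle := stopping_time_le_set hth ht (lexx t).
rewrite (filtration_measurableE ht) in slt sle thle *.
by apply: measurableU; apply: measurableI => //; exact: measurableC.
Qed.

Lemma F_at_ltr (s th : Omega -> R) : stopping_time T F s -> stopping_time T F th ->
  F_at T F th [set w | s w < th w].
Proof.
move=> hs hth t ht.
have slt := filtration_lt ht (measurable_stopping_time_min hs ht)
                            (measurable_stopping_time_min hth ht).
have thle := stopping_time_le_set hth ht (lexx t).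
rewrite (_ : _ `&` _ = [set w | Num.min (s w) t < Num.min (th w) t] `&` [set w | th w <= t]).
  by rewrite (filtration_measurableE ht) in slt thle *; exact: measurableI.
apply/seteqP; split => w /= [+ tht]; rewrite (min_l tht) => slt'; split => //.
  by rewrite (min_l (ltW (lt_le_trans slt' tht))).
have [st|st] := leP (s w) t; first by rewrite (min_l st) in slt'.
by rewrite (min_r (ltW st)) in slt'; move: (le_lt_trans tht slt'); rewrite ltxx.
Qed.

Lemma F_at_bigcap (s : Omega -> R) (B : nat -> set Omega) :
  (forall n, F_at T F s (B n)) -> F_at T F s (\bigcap_n B n).
Proof.
move=> FB t ht; rewrite -bigcapIl; last by exists 0%N.
rewrite (filtration_measurableE ht).
by apply: bigcapT_measurable => n; rewrite -(filtration_measurableE ht); exact: FB.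
Qed.

(* The paper's restriction [s_B] (= [s] on [B], [+oo] off [B]), capped at [c] so that it
   stays a [[0, T]]-valued stopping time. *)
Definition restrict_cap (s : Omega -> R) (B : set Omega) (c : R) (w : Omega) : R :=
  if `[< B w >] then Num.min (s w) c else c.

Lemma stopping_time_restrict_cap (s : Omega -> R) (B : set Omega) (c : R) :
  stopping_time T F s -> F_at T F s B -> 0 <= c <= T ->
  stopping_time T F (restrict_cap s B c).
Proof.
move=> hs FB /andP[c0 cT]; split.
  move=> w; rewrite /restrict_cap; case: asboolP => _; last by rewrite c0.
  have /andP[s0 _] := hs.1 w.
  by rewrite le_min s0 c0 ge_min cT orbT.
move=> t ht; have [ct|tc] := leP c t.
  rewrite (_ : [set w | _] = setT); first exact: filtration_setT.
  apply/seteqP; split => // w _ /=; rewrite /restrict_cap.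
  by case: asboolP => _ //; rewrite ge_min ct orbT.
rewrite (_ : [set w | _] = B `&` [set w | s w <= t]); first exact: FB.
have ctF : (c <= t) = false by rewrite leNgt tc.
apply/seteqP; split => w /=; rewrite /restrict_cap;
  case: asboolP => // Bw; rewrite ?ge_min ctF ?orbF //; by [split|case].
Qed.

End stopping_times.

Lemma cvg_min (R : realType) (u v : nat -> R) (a b : R) :
  u @ \oo --> a -> v @ \oo --> b ->
  (fun n => Num.min (u n) (v n)) @ \oo --> Num.min a b.
Proof. by apply: continuous2_cvg; exact: (@min_continuous _ R (a, b)). Qed.

Section lower_approx.
Context {R : realType} (T : R).

Definition lower_approx (n : nat) : R := T - T / n.+1%:R.

Lemma cvg_lower_approx : lower_approx @ \oo --> T.
Proof.
rewrite -[X in _ --> X]subr0 -[X in _ --> _ - X](mulr0 T).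
exact: cvgB (cvg_cst _) (cvgM (cvg_cst _) cvg_harmonic).
Qed.

Hypothesis T_gt0 : 0 < T.

Lemma lower_approx_ge0 n : 0 <= lower_approx n.
Proof.
rewrite subr_ge0 ler_pdivrMr ?ltr0n // ler_peMr ?ler1n //; exact: ltW.
Qed.

Lemma lower_approx_lt n : lower_approx n < T.
Proof. by rewrite ltrBlDr ltrDl divr_gt0 ?ltr0n. Qed.

Lemma lower_approx_le n : lower_approx n <= lower_approx n.+1.
Proof.
by rewrite lerD2l lerN2 ler_pM2l // lef_pV2 ?posrE ?ltr0n // ler_nat.
Qed.

End lower_approx.

Section restricted_limit.
Context {d : measure_display} {Omega : measurableType d} {R : realType}.
Context {P : probability Omega R} {T : R} {F : R -> set (set Omega)}.
Context {theta : Omega -> R} {thetan : nat -> Omega -> R}.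
Hypotheses (hF : usual_filtration P T F) (T_gt0 : 0 < T).
Hypotheses (htheta : stopping_time T F theta)
  (hthetan : forall n, stopping_time T F (thetan n))
  (hmono : forall n w, thetan n w <= thetan n.+1 w)
  (hlim : forall w, (fun n => thetan n w) @ \oo --> theta w).

Definition strict_approach : set Omega := \bigcap_n [set w | thetan n w < theta w].

Definition restricted_limit : Omega -> R := restrict_cap theta strict_approach T.

Definition announcing (n : nat) : Omega -> R :=
  restrict_cap (thetan n) [set w | thetan n w < theta w] (lower_approx T n).

Lemma restricted_limitE w : strict_approach w -> restricted_limit w = theta w.
Proof.
move=> Aw; rewrite /restricted_limit /restrict_cap asboolT // min_l //.
by case/andP: (htheta.1 w).
Qed.

Lemma restricted_limit_gt0 w : 0 < restricted_limit w.
Proof.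
rewrite /restricted_limit /restrict_cap; case: asboolP => // Aw.
rewrite lt_min T_gt0 andbT; have /andP[thetan0 _] := (hthetan 0).1 w.
exact: le_lt_trans thetan0 (Aw 0%N I).
Qed.

Lemma stopping_time_restricted_limit : stopping_time T F restricted_limit.
Proof.
apply: (stopping_time_restrict_cap hF) => //; last by rewrite lexx ltW.
by apply: (F_at_bigcap hF) => n; exact: (F_at_ltr hF).
Qed.

Lemma announcing_le_lower_approx n w : announcing n w <= lower_approx T n.
Proof.
by rewrite /announcing /restrict_cap; case: asboolP => _ //; rewrite ge_min lexx orbT.
Qed.

Lemma stopping_time_announcing n : stopping_time T F (announcing n).
Proof.
rewrite /announcing; apply: (stopping_time_restrict_cap hF) => //; first exact: (F_at_ltl hF).
by rewrite lower_approx_ge0 // ltW // lower_approx_lt.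
Qed.

Lemma announcing_nondecreasing n w : announcing n w <= announcing n.+1 w.
Proof.
have c_le := lower_approx_le _ T_gt0 n.
rewrite {2}/announcing /restrict_cap; case: asboolP => [lt_next|_]; last first.
  exact: le_trans (announcing_le_lower_approx n w) c_le.
rewrite /announcing /restrict_cap asboolT /=; last exact: le_lt_trans (hmono n w) lt_next.
by rewrite le_min !ge_min hmono c_le !orbT.
Qed.

Lemma announcing_lt n w : announcing n w < restricted_limit w.
Proof.
have [Aw|Aw] := pselect (strict_approach w); last first.
  rewrite /restricted_limit /restrict_cap asboolF //.
  exact: le_lt_trans (announcing_le_lower_approx n w) (lower_approx_lt _ T_gt0 n).
rewrite restricted_limitE // /announcing /restrict_cap asboolT; last exact: Aw n I.
by rewrite gt_min (Aw n I).
Qed.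

Lemma cvg_announcing w : (fun n => announcing n w) @ \oo --> restricted_limit w.
Proof.
have [Aw|Aw] := pselect (strict_approach w).
  have -> : (fun n => announcing n w) = (fun n => Num.min (thetan n w) (lower_approx T n)).
    by apply/funext => n; rewrite /announcing /restrict_cap asboolT //; exact: Aw.
  rewrite /restricted_limit /restrict_cap asboolT //.
  exact: cvg_min (hlim w) (cvg_lower_approx T).
rewrite /restricted_limit /restrict_cap asboolF //.
have [m /negP] : exists m, ~ (thetan m w < theta w).
  by apply/existsNP => lt_all; apply: Aw => n _; exact: lt_all.
rewrite -leNgt => theta_le; apply: cvg_trans (cvg_lower_approx T); apply: near_eq_cvg.
have mono : {homo (fun n => thetan n w) : n m / (n <= m)%N >-> n <= m}.
  by apply/nondecreasing_seqP => n; exact: hmono.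
exists m => // k /= mk; rewrite /announcing /restrict_cap asboolF //.
by apply/negP; rewrite -leNgt; exact: le_trans theta_le (mono m k mk).
Qed.

Lemma predictable_restricted_limit : predictable T F restricted_limit.
Proof.
split; first exact: stopping_time_restricted_limit.
exists announcing; split => //; [exact: stopping_time_announcing|
  exact: announcing_nondecreasing|exact: cvg_announcing|by move=> n w _; exact: announcing_lt].
Qed.

End restricted_limit.

Arguments strict_approach {d Omega R} theta thetan.
Arguments restricted_limit {d Omega R} T theta thetan.

Lemma admissible_eq_negligible {d : measure_display} {Omega : measurableType d}
    {R : realType} {P : probability Omega R} {T : R} {F : R -> set (set Omega)}
    {xi zeta : (Omega -> R) -> Omega -> \bar R} {s t : Omega -> R} :
  admissible P T F xi -> admissible P T F zeta ->
  stopping_time T F s -> stopping_time T F t ->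
  P.-negligible [set w | s w = t w /\ xi t w = zeta t w /\ xi s w <> zeta s w].
Proof.
move=> [_ xi_eq] [_ zeta_eq] hs ht.
apply: (negligibleS _ (negligibleU (xi_eq s t hs ht) (zeta_eq s t hs ht))).
move=> w /= [st [eq_t ne_s]].
have [xi_st|] := pselect (xi s w = xi t w); last by left.
by right; split => // zeta_st; apply: ne_s; rewrite xi_st zeta_st.
Qed.

Theorem lemma4p7 (d : measure_display) (Omega : measurableType d) (R : realType)
  (P : probability Omega R) (T : R) (F : R -> set (set Omega))
  (hT : 0 < T) (hF : usual_filtration P T F)
  (xi zeta : (Omega -> R) -> Omega -> \bar R)
  (hxi : admissible P T F xi) (hzeta : admissible P T F zeta)
  (hpred : forall tau, predictable T F tau ->
     P.-negligible [set w | ~ (0 < tau w)] ->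
     P.-negligible [set w | xi tau w = zeta tau w])
  (theta : Omega -> R) (thetan : nat -> Omega -> R)
  (htheta : stopping_time T F theta)
  (hthetan : forall n, stopping_time T F (thetan n))
  (hmono : forall n w, thetan n w <= thetan n.+1 w)
  (hlim : forall w, (fun n => thetan n w) @ \oo --> theta w) :
  P.-negligible [set w | xi theta w = zeta theta w /\
                         (forall n, thetan n w < theta w)].
Proof.
pose tau := restricted_limit T theta thetan.
have tau_st : stopping_time T F tau := stopping_time_restricted_limit hF hT htheta hthetan.
have tau_eq : P.-negligible [set w | xi tau w = zeta tau w].
  apply: hpred; first exact: (predictable_restricted_limit hF hT htheta hthetan hmono hlim).
  rewrite (_ : [set w | _] = set0); first exact: negligible_set0.
  by apply/seteqP; split => // w /=; apply; exact: (restricted_limit_gt0 hT hthetan).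
apply: (negligibleS _ (negligibleU tau_eq (admissible_eq_negligible hxi hzeta tau_st htheta))).
move=> w /= [eq_theta lt_theta].
have tauE : tau w = theta w by apply: (restricted_limitE htheta) => n _; exact: lt_theta.
by have [|ne_tau] := pselect (xi tau w = zeta tau w); [left|right].
Qed.
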